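(* For all integers $d\ge 2$ and $n\ge 1$, the lattice $\Gamma(M_{d,n})$, ordered pointwise ($f\le g$ iff $f(x)\le g(x)$ for all $x\in M_{d,n}$), is distributive if and only if $n\in\{1,2\}$.
   Context: For integers $d\ge 2$, $n\ge 1$, the $(d,n)$-book lattice $M_{d,n}$ is the finite lattice with universe $\{0,1\}\cup\{a_i: 1\le i\le n\}\cup\{b_j:1\le j\le d-2\}$ and order generated by $0<a_i<b_1<b_2<\cdots<b_{d-2}<1$ for each $1\le i\le n$ (the $a_i$ are pairwise incomparable; when $d=2$ there are no $b_j$ and $0<a_i<1$). For a finite lattice $L$, the geometric realization $\Gamma(L)$ is the set of functions $f\colon L\to[0,1]$ such that for every $s\in[0,1]$ the level set $f_s=\{x\in L: f(x)\ge s\}$ is a principal ideal of $L$, topologized as a subspace of $[0,1]^L$. Equivalently, writing $\phi_a$ for the indicator function of the principal ideal $\{x: x\le a\}$, $\Gamma(L)$ consists of the convex combinations $\sum_{a\in C}u_a\phi_a$ over chains $C$ of $L$. The pointwise order on $\Gamma(L)$ is a lattice order, and $\Gamma(L)$ is regarded as a lattice with the induced meet and join. The maps $h_s\colon\Gamma(L)\to L$, $h_s(f)=\bigvee f_s$ ($s\in[0,1]$) are known to be lattice homomorphisms jointly realizing $\Gamma(L)$ as a subdirect power of $L$. *)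

From mathcomp Require Import all_boot all_order all_algebra.
From mathcomp Require Import reals.
Set Implicit Arguments. Unset Strict Implicit. Unset Printing Implicit Defensive.
Import Order.TTheory GRing.Theory Num.Theory.
Local Open Scope ring_scope.

(* The (d,n)-book lattice M_{d,n}:
   Mbot = 0, Mtop = 1, Ma i = a_{i+1} (i : 'I_n), Mb j = b_{j+1} (j : 'I_(d-2)). *)
Inductive book (d n : nat) : Type :=
| Mbot | Mtop | Ma of 'I_n | Mb of 'I_(d - 2).
Arguments Mbot {d n}. Arguments Mtop {d n}.

Definition book_le (d n : nat) (x y : book d n) : bool :=
  match x, y with
  | Mbot, _ => true
  | _, Mtop => true
  | Ma i, Ma i' => i == i'
  | Ma _, Mb _ => true
  | Mb j, Mb j' => (j <= j')%N
  | _, _ => false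
  end.

Definition Gamma (R : realType) (d n : nat) (f : book d n -> R) : Prop :=
  (forall x, 0 <= f x <= 1) /\
  (forall s : R, 0 <= s <= 1 ->
     exists a : book d n, forall x, (s <= f x) <-> book_le x a).

Definition fle (R : realType) (T : Type) (f g : T -> R) : Prop :=
  forall x, f x <= g x.

Definition is_join (R : realType) (T : Type) (S : (T -> R) -> Prop)
  (f g j : T -> R) : Prop :=
  S j /\ fle f j /\ fle g j /\ (forall k, S k -> fle f k -> fle g k -> fle j k).

Definition is_meet (R : realType) (T : Type) (S : (T -> R) -> Prop)
  (f g m : T -> R) : Prop :=
  S m /\ fle m f /\ fle m g /\ (forall k, S k -> fle k f -> fle k g -> fle k m).

Definition distributive_lattice (R : realType) (T : Type)
  (S : (T -> R) -> Prop) : Prop :=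
  forall f g h gh l fg fh r : T -> R,
    S f -> S g -> S h ->
    is_join S g h gh -> is_meet S f gh l ->
    is_meet S f g fg -> is_meet S f h fh -> is_join S fg fh r ->
    l = r.

From HB Require Import structures.
From mathcomp Require Import all_boot all_order all_algebra.
From mathcomp Require Import reals.
From Stdlib Require Import FunctionalExtensionality.
From mathcomp Require Import zify.
Set Implicit Arguments. Unset Strict Implicit. Unset Printing Implicit Defensive.
Import Order.TTheory GRing.Theory Num.Theory.
Local Open Scope ring_scope.

(* Every f in Gamma(L) is determined by its level ideals f_s, and the lattice
   operations of Gamma(L) act levelwise: (f /\ g)_s = f_s /\ g_s and
   (f \/ g)_s = f_s \/ g_s.  Hence Gamma(L) is distributive iff L is; for the
   converse one evaluates the distributive law on the indicators of principal
   ideals.  Finally M_{d,n} is distributive iff n <= 2: three atoms violate the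
   law, while for n <= 2 the only incomparable pair is the pair of atoms. *)

Section BookFinType.
Variables d n : nat.

Definition book_code (x : book d n) : option (option ('I_n + 'I_(d - 2))) :=
  match x with
  | Mbot => None
  | Mtop => Some None
  | Ma i => Some (Some (inl i))
  | Mb j => Some (Some (inr j))
  end.

Definition book_decode (c : option (option ('I_n + 'I_(d - 2)))) : book d n :=
  match c with
  | None => Mbot
  | Some None => Mtop
  | Some (Some (inl i)) => Ma d i
  | Some (Some (inr j)) => Mb n j
  end.

Lemma book_codeK : cancel book_code book_decode. Proof. by case. Qed.

End BookFinType.

HB.instance Definition _ (d n : nat) :=
  Finite.copy (book d n) (can_type (@book_codeK d n)).

Section BookLattice.
Variables d n : nat.
Local Notation B := (book d n).
Implicit Types a b c x y z : B.

Lemma book_lexx x : book_le x x.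
Proof. by case: x => //= j; rewrite leqnn. Qed.

Lemma book_le_trans : transitive (@book_le d n).
Proof.
move=> y x z; case: x => [||i|j]; case: y => [||i'|j']; case: z => [||i''|j''] //=.
- by move/eqP=> ->.
- exact: leq_trans.
Qed.

Lemma book_le_anti x y : book_le x y -> book_le y x -> x = y.
Proof.
case: x; case: y => //= i j; first by move/eqP=> ->.
by move=> ji ij; congr Mb; apply/val_inj/eqP; rewrite eqn_leq ij ji.
Qed.

Lemma book_le_eq x y : (forall z, book_le z x = book_le z y) -> x = y.
Proof.
by move=> exy; apply: book_le_anti; [rewrite -exy|rewrite exy]; apply: book_lexx.
Qed.

(* b_1, or 1 when d = 2: the join of two distinct atoms. *)
Definition book_up : B :=
  if insub 0%N : option 'I_(d - 2) is Some j then Mb n j else Mtop.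

Lemma book_up_le z : book_le book_up z = if z is Ma _ then false else z != Mbot.
Proof.
rewrite /book_up; case: insubP => [j _ j0|d2].
  by case: z => //= k; rewrite j0.
by case: z => // k; move: d2; rewrite (leq_ltn_trans _ (ltn_ord k)).
Qed.

Definition bjoin x y : B :=
  match x, y with
  | Mbot, y => y
  | x, Mbot => x
  | Mtop, _ | _, Mtop => Mtop
  | Ma i, Ma i' => if i == i' then Ma d i else book_up
  | Ma _, Mb j | Mb j, Ma _ => Mb n j
  | Mb j, Mb j' => if (j <= j')%N then Mb n j' else Mb n j
  end.

Definition bmeet x y : B :=
  match x, y with
  | Mtop, y => y
  | x, Mtop => x
  | Mbot, _ | _, Mbot => Mbot
  | Ma i, Ma i' => if i == i' then Ma d i else Mbot
  | Ma i, Mb _ | Mb _, Ma i => Ma d i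
  | Mb j, Mb j' => if (j <= j')%N then Mb n j else Mb n j'
  end.

Lemma book_leUx x y z : book_le (bjoin x y) z = book_le x z && book_le y z.
Proof.
case: x => [||i|j]; case: y => [||i'|j']; case: z => [||k|k'] //=;
  rewrite ?andbT ?andbF ?book_up_le //.
all: try by case: eqP => [->|ne]; rewrite /= ?andbb ?book_up_le.
- case: eqP => [->|ne] /=; rewrite ?andbb ?book_up_le //.
  by apply/esym/andP => -[/eqP ik /eqP i'k]; apply: ne; rewrite ik i'k.
all: case: leqP => jj' /=; rewrite //.
- by case jk: (j' <= k')%N; rewrite ?andbF ?andbT // (leq_trans jj' jk).
- by case jk: (j <= k')%N; rewrite ?andbF ?andbT // (leq_trans (ltnW jj') jk).
Qed.

Lemma book_lexI x y z : book_le z (bmeet x y) = book_le z x && book_le z y.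
Proof.
case: x => [||i|j]; case: y => [||i'|j']; case: z => [||k|k'] //=;
  rewrite ?andbT ?andbF //.
all: try by case: ifP.
- case: (i =P i') => [->|ne] /=; rewrite ?andbb //.
  by apply/esym/andP => -[/eqP ki /eqP ki']; apply: ne; rewrite -ki -ki'.
all: case: leqP => jj' /=; rewrite //.
- by case kj: (k' <= j)%N; rewrite ?andbF ?andbT // (leq_trans kj jj').
- by case kj: (k' <= j')%N; rewrite ?andbF ?andbT // (leq_trans kj (ltnW jj')).
Qed.

Lemma book_leUl x y : book_le x (bjoin x y).
Proof. by have := book_lexx (bjoin x y); rewrite book_leUx => /andP[]. Qed.

Lemma book_leUr x y : book_le y (bjoin x y).
Proof. by have := book_lexx (bjoin x y); rewrite book_leUx => /andP[]. Qed.

Lemma book_leIl x y : book_le (bmeet x y) x.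
Proof. by have := book_lexx (bmeet x y); rewrite book_lexI => /andP[]. Qed.

Lemma book_leIr x y : book_le (bmeet x y) y.
Proof. by have := book_lexx (bmeet x y); rewrite book_lexI => /andP[]. Qed.

Lemma book_join_r x y : book_le x y -> bjoin x y = y.
Proof.
move=> xy; apply: book_le_anti; last exact: book_leUr.
by rewrite book_leUx xy book_lexx.
Qed.

Lemma book_meet_r x y : book_le y x -> bmeet x y = y.
Proof.
move=> yx; apply: book_le_anti; first exact: book_leIr.
by rewrite book_lexI yx book_lexx.
Qed.

Lemma bjoinC x y : bjoin x y = bjoin y x.
Proof. by apply: book_le_anti; rewrite book_leUx andbC -book_leUx book_lexx. Qed.

Lemma book_incomparable x y : ~~ book_le x y -> ~~ book_le y x ->
  exists i j, [/\ x = Ma d i, y = Ma d j & i != j].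
Proof.
case: x => [||i|j]; case: y => [||i'|j'] //=; first by move=> ii' _; exists i, i'.
by rewrite -ltnNge => /ltnW ->.
Qed.

Lemma book_le_distr a b c :
  book_le (bjoin (bmeet a b) (bmeet a c)) (bmeet a (bjoin b c)).
Proof.
rewrite book_leUx !book_lexI !book_leIl /=.
rewrite (book_le_trans (y:=b)) ?book_leIr ?book_leUl //=.
by rewrite (book_le_trans (y:=c)) ?book_leIr ?book_leUr.
Qed.

Definition book_distributive :=
  forall a b c, bmeet a (bjoin b c) = bjoin (bmeet a b) (bmeet a c).

Lemma book_distributive_le2 : (n <= 2)%N -> book_distributive.
Proof.
move=> n_le2 a b c; apply: book_le_anti (book_le_distr a b c).
have [bc|cb] := boolP (book_le b c).
  by rewrite book_join_r // book_leUr.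
have [cb'|bc'] := boolP (book_le c b).
  by rewrite bjoinC book_join_r // book_leUl.
have [i [j [-> -> ij]]] := book_incomparable cb bc'.
case: a => [||k|l]; [exact: book_leIl|exact: book_leIr| |exact: book_leIr].
have /orP[/eqP->|/eqP->] : (k == i) || (k == j).
  by case: k i j ij => [k ?] [i ?] [j ?]; rewrite -!(inj_eq val_inj) /=; lia.
all: apply: book_le_trans (book_leIl _ _) _.
  by rewrite (book_meet_r (book_lexx _)) book_leUl.
by rewrite (book_meet_r (book_lexx _)) book_leUr.
Qed.

Lemma book_atom_le_up i : book_le (Ma d i) book_up.
Proof. by rewrite /book_up; case: insubP. Qed.

Lemma book_not_distributive_gt2 : (2 < n)%N -> ~ book_distributive.
Proof.
move=> n_gt2 distr; have [n0 n1] : (0 < n)%N /\ (1 < n)%N by lia.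
pose a i (lt_in : (i < n)%N) : B := Ma d (Ordinal lt_in).
have := distr (a 0 n0) (a 1 n1) (a 2 n_gt2).
have -> : bjoin (bmeet (a 0 n0) (a 1 n1)) (bmeet (a 0 n0) (a 2 n_gt2)) = Mbot by [].
have -> : bjoin (a 1 n1) (a 2 n_gt2) = book_up by [].
by move/(congr1 (book_le (a 0 n0))); rewrite book_lexI book_lexx book_atom_le_up.
Qed.

Lemma book_distributiveP : book_distributive <-> (n <= 2)%N.
Proof.
split; last exact: book_distributive_le2.
by move=> distr; rewrite leqNgt; apply/negP => /book_not_distributive_gt2.
Qed.

End BookLattice.

Section PointwiseBounds.
Variables (R : realType) (T : Type) (S : (T -> R) -> Prop).

Lemma fle_anti (f g : T -> R) : fle f g -> fle g f -> f = g.
Proof.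
by move=> fg gf; apply: functional_extensionality => x; apply: le_anti; rewrite fg gf.
Qed.

Lemma is_join_unique f g j j' : is_join S f g j -> is_join S f g j' -> j = j'.
Proof.
move=> [Sj [fj [gj lub_j]]] [Sj' [fj' [gj' lub_j']]].
by apply: fle_anti; [apply: lub_j | apply: lub_j'].
Qed.

Lemma is_meet_unique f g m m' : is_meet S f g m -> is_meet S f g m' -> m = m'.
Proof.
move=> [Sm [mf [mg glb_m]]] [Sm' [mf' [mg' glb_m']]].
by apply: fle_anti; [apply: glb_m' | apply: glb_m].
Qed.

End PointwiseBounds.

Section Realization.
Variables (R : realType) (d n : nat).
Local Notation B := (book d n).
Local Notation Gamma := (@Gamma R d n).
Implicit Types (f g h p q k : B -> R) (a x y z : B) (s : R).

Definition level_ideal f s a := forall x, s <= f x <-> book_le x a.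

Lemma Gamma_level f s : Gamma f -> 0 <= s <= 1 -> exists a, level_ideal f s a.
Proof. by case=> _; apply. Qed.

Lemma Gamma_ge0 f x : Gamma f -> 0 <= f x.
Proof. by case=> /(_ x) /andP[]. Qed.

Lemma Gamma_le1 f x : Gamma f -> f x <= 1.
Proof. by case=> /(_ x) /andP[]. Qed.

Lemma Gamma_bot f : Gamma f -> f Mbot = 1.
Proof.
move=> Gf; have [a fa] := Gamma_level Gf (introT andP (conj ler01 (lexx 1))).
by apply: le_anti; rewrite Gamma_le1 //=; apply/fa.
Qed.

Lemma Gamma_eq f g : Gamma f -> Gamma g ->
  (forall s x, 0 <= s <= 1 -> s <= f x <-> s <= g x) -> f = g.
Proof.
by move=> Gf Gg fg; apply: fle_anti => x; apply/fg; rewrite ?lexx ?Gamma_ge0 ?Gamma_le1.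
Qed.

Definition Gmeet f g x := Order.min (f x) (g x).

(* The join of Gamma is not the pointwise max: it is built so that its level
   ideals are the joins of those of p and q (lemma level_join). *)
Definition Gjoin p q x :=
  \big[Order.max/0]_(yz : B * B | book_le x (bjoin yz.1 yz.2))
    Order.min (p yz.1) (q yz.2).

Lemma level_meet f g s a b :
  level_ideal f s a -> level_ideal g s b -> level_ideal (Gmeet f g) s (bmeet a b).
Proof. by move=> fa gb x; rewrite le_min book_lexI; split=> /andP[/fa-> /gb->]. Qed.

Lemma Gjoin_attained p q x : Gamma p -> Gamma q ->
  exists y z, book_le x (bjoin y z) /\ Gjoin p q x = Order.min (p y) (q z).
Proof.
move=> Gp Gq; rewrite /Gjoin; pose F (yz : B * B) := Order.min (p yz.1) (q yz.2).
have F_ge0 yz : 0 <= F yz by rewrite le_min !Gamma_ge0.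
have [[y z] xyz ->] := eq_bigmax (x, Mbot)
  [pred yz : B * B | book_le x (bjoin yz.1 yz.2)] F (book_leUl x Mbot)
  (fun yz _ => F_ge0 yz).
by exists y, z.
Qed.

Lemma level_join p q s a b : Gamma p -> Gamma q ->
  level_ideal p s a -> level_ideal q s b -> level_ideal (Gjoin p q) s (bjoin a b).
Proof.
move=> Gp Gq pa qb x; split.
  have [y [z [xyz ->]]] := Gjoin_attained x Gp Gq.
  rewrite le_min => /andP[/pa ya /qb zb]; apply: book_le_trans xyz _.
  by rewrite book_leUx (book_le_trans ya) ?book_leUl // (book_le_trans zb) ?book_leUr.
move=> xab; apply: (bigmax_sup (a, b)) => //=.
by rewrite le_min; apply/andP; split; [apply/pa|apply/qb]; apply: book_lexx.
Qed.

Lemma Gamma_meet f g : Gamma f -> Gamma g -> Gamma (Gmeet f g).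
Proof.
move=> Gf Gg; split=> [x|s s01].
  by rewrite le_min ge_min !Gamma_ge0 ?Gamma_le1.
have [[a fa] [b gb]] := (Gamma_level Gf s01, Gamma_level Gg s01).
by exists (bmeet a b); apply: level_meet.
Qed.

Lemma Gamma_join p q : Gamma p -> Gamma q -> Gamma (Gjoin p q).
Proof.
move=> Gp Gq; split=> [x|s s01].
  have [y [z [_ ->]]] := Gjoin_attained x Gp Gq.
  by rewrite le_min ge_min !Gamma_ge0 ?Gamma_le1.
have [[a pa] [b qb]] := (Gamma_level Gp s01, Gamma_level Gq s01).
by exists (bjoin a b); apply: level_join.
Qed.

Lemma Gmeet_is_meet f g : Gamma f -> Gamma g -> is_meet Gamma f g (Gmeet f g).
Proof.
move=> Gf Gg; split; first exact: Gamma_meet.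
split=> [x|]; first by rewrite ge_min lexx.
split=> [x|k _ kf kg x]; first by rewrite ge_min lexx orbT.
by rewrite le_min kf kg.
Qed.

Lemma Gjoin_is_join p q : Gamma p -> Gamma q -> is_join Gamma p q (Gjoin p q).
Proof.
move=> Gp Gq; split; first exact: Gamma_join.
split=> [x|].
  apply: (bigmax_sup (x, Mbot)); rewrite /= ?book_leUl //.
  by rewrite (Gamma_bot Gq) le_min lexx Gamma_le1.
split=> [x|k Gk pk qk x].
  apply: (bigmax_sup (Mbot, x)); rewrite /= ?book_lexx //.
  by rewrite (Gamma_bot Gp) le_min lexx Gamma_le1.
(* compare level ideals at height s = Gjoin p q x *)
have s01 : 0 <= Gjoin p q x <= 1 by case: (Gamma_join Gp Gq).
have [[[a pa] [b qb]] [c kc]] :=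
  (Gamma_level Gp s01, Gamma_level Gq s01, Gamma_level Gk s01).
apply/kc; apply: book_le_trans (proj1 (level_join Gp Gq pa qb x) (lexx _)) _.
rewrite book_leUx; apply/andP; split; apply/kc.
  by apply: le_trans (pk a); apply/pa/book_lexx.
by apply: le_trans (qk b); apply/qb/book_lexx.
Qed.

Definition ideal_indicator a x : R := if book_le x a then 1 else 0.

Lemma Gamma_ideal_indicator a : Gamma (ideal_indicator a).
Proof.
split=> [x|s /andP[s0 s1]].
  by rewrite /ideal_indicator; case: ifP; rewrite ?lexx ler01.
have [s_le0|s_gt0] := leP s 0.
  exists Mtop => x; have -> : book_le x Mtop by case: x.
  split=> // _.
  by apply: le_trans s_le0 _; rewrite /ideal_indicator; case: ifP; rewrite ?ler01.
exists a => x; rewrite /ideal_indicator; case: ifP => // _; split=> // s_le0.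
by move: (lt_le_trans s_gt0 s_le0); rewrite ltxx.
Qed.

Lemma level_ideal_indicator a : level_ideal (ideal_indicator a) 1 a.
Proof.
move=> x; rewrite /ideal_indicator; case: ifP => //; split=> // one_le0.
by move: (le_lt_trans one_le0 ltr01); rewrite ltxx.
Qed.

Lemma Gamma_distributive_of_book : book_distributive d n -> distributive_lattice Gamma.
Proof.
move=> distr f g h gh l fg fh r Gf Gg Gh Jgh Ml Mfg Mfh Jr.
rewrite (is_join_unique Jgh (Gjoin_is_join Gg Gh)) in Ml.
rewrite (is_meet_unique Mfg (Gmeet_is_meet Gf Gg)) in Jr.
rewrite (is_meet_unique Mfh (Gmeet_is_meet Gf Gh)) in Jr.
have Gfg := Gamma_meet Gf Gg; have Gfh := Gamma_meet Gf Gh.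
rewrite (is_meet_unique Ml (Gmeet_is_meet Gf (Gamma_join Gg Gh))).
rewrite (is_join_unique Jr (Gjoin_is_join Gfg Gfh)).
apply: Gamma_eq => [||s x s01]; [exact/Gamma_meet/Gamma_join|exact: Gamma_join|].
have [[[a fa] [b gb]] [c hc]] :=
  (Gamma_level Gf s01, Gamma_level Gg s01, Gamma_level Gh s01).
rewrite (level_meet fa (level_join Gg Gh gb hc)).
by rewrite (level_join Gfg Gfh (level_meet fa gb) (level_meet fa hc)) distr.
Qed.

Lemma book_distributive_of_Gamma :
  distributive_lattice Gamma -> book_distributive d n.
Proof.
move=> distr a b c.
have GI := Gamma_ideal_indicator; have LI := level_ideal_indicator.
have [GIab GIac] := (Gamma_meet (GI a) (GI b), Gamma_meet (GI a) (GI c)).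
have := level_meet (LI a) (level_join (GI b) (GI c) (LI b) (LI c)).
rewrite (distr _ _ _ _ _ _ _ _ (GI a) (GI b) (GI c) (Gjoin_is_join (GI b) (GI c))
  (Gmeet_is_meet (GI a) (Gamma_join (GI b) (GI c))) (Gmeet_is_meet (GI a) (GI b))
  (Gmeet_is_meet (GI a) (GI c)) (Gjoin_is_join GIab GIac)) => lhs.
have rhs := level_join GIab GIac (level_meet (LI a) (LI b)) (level_meet (LI a) (LI c)).
by apply: book_le_eq => x; apply/idP/idP => [/lhs/rhs|/rhs/lhs].
Qed.

End Realization.

Theorem mainTheorem4 (R : realType) (d n : nat) :
  (2 <= d)%N -> (1 <= n)%N ->
  (distributive_lattice (@Gamma R d n) <-> (n = 1 \/ n = 2)%N).
Proof.
move=> _ n_ge1.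
have Gamma_book : distributive_lattice (@Gamma R d n) <-> book_distributive d n.
  by split; [exact: book_distributive_of_Gamma | exact: Gamma_distributive_of_book].
rewrite Gamma_book book_distributiveP; lia.
Qed.
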